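(* Let $\alpha=[a_0;a_1,a_2,\dots]$ be irrational with convergents $p_k/q_k$, and for integers $k\ge1$, $0\le M<q_k$ let \[ B_{k,M}(x)= \log \frac{P_M (\alpha, (-1)^k x/q_k)}{P_M (p_k/q_k, (-1)^k x/q_k)} - \sum_{n=1}^M \sin (\pi n \| q_k \alpha \| /q_k ) \cot \left( \pi \frac{n (-1)^k p_k+x}{q_k} \right) . \] (i) Let $k \ge 1$ and $0 \le M < q_k$ be integers, and assume that $q_k \| q_k \alpha \| \le 1-c_k$ and $-1<x \le 1-\frac{q_k \| q_k \alpha \|}{1-c_k}$ for some $c_k$ with $10/q_k^2 \le c_k<1$. Then \[ -C \frac{\log (4/c_k)}{(1-|x|)^2 a_{k+1}^2} \le B_{k,M}(x) \le C \frac{1}{a_{k+1}^2 q_k} \] with a universal constant $C>0$. (ii) Let $N=\sum_{k=0}^{K-1} b_k q_k$ be the Ostrowski expansion of a non-negative integer. For any $1 \le k \le K-1$, any $0 \le M <q_k$ and any $0 \le b \le b_k-1$, \[ B_{k,M}(b q_k \| q_k \alpha \| + \varepsilon_k (N)) \le C \frac{1}{a_{k+1}^2q_k} \] with a universal constant $C>0$.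
   Context: $P_N(\beta,x)=\prod_{n=1}^N|2\sin(\pi(n\beta+x))|$. $p_k/q_k=[a_0;a_1,\dots,a_k]$; $\|y\|$ is distance to nearest integer. Ostrowski expansion: the unique representation $N=\sum_{k=0}^{K-1}b_kq_k$ with integers $0\le b_0<a_1$, $0\le b_k\le a_{k+1}$, and $b_{k-1}=0$ whenever $b_k=a_{k+1}$. $\varepsilon_k(N):=q_k\sum_{\ell=k+1}^{K-1}(-1)^{k+\ell}b_\ell\|q_\ell\alpha\|$. *)

From Stdlib Require Import Reals ZArith Lra List.
Import ListNotations.
Open Scope R_scope.

(* floor of a real: Stdlib's Int_part r = up r - 1 is the floor. *)
Definition floorZ (r : R) : Z := Int_part r.

Fixpoint cquot (alpha : R) (k : nat) : R :=
  match k with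
  | O => alpha
  | S k' => / (cquot alpha k' - IZR (floorZ (cquot alpha k')))
  end.

Definition cf_a (alpha : R) (k : nat) : Z := floorZ (cquot alpha k).

(* ((p_k, q_k), (p_{k-1}, q_{k-1})) with p_{-1} = 1, q_{-1} = 0 *)
Fixpoint conv_pair (alpha : R) (k : nat) : (Z * Z) * (Z * Z) :=
  match k with
  | O => ((cf_a alpha 0, 1%Z), (1%Z, 0%Z))
  | S k' =>
      let '((p, q), (p', q')) := conv_pair alpha k' in
      let a := cf_a alpha (S k') in
      (((a * p + p')%Z, (a * q + q')%Z), (p, q))
  end.

Definition cf_p (alpha : R) (k : nat) : Z := fst (fst (conv_pair alpha k)).
Definition cf_q (alpha : R) (k : nat) : Z := snd (fst (conv_pair alpha k)).

Definition irrational (alpha : R) : Prop :=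
  forall (p q : Z), q <> 0%Z -> alpha <> IZR p / IZR q.

Definition dist_int (y : R) : R :=
  Rmin (y - IZR (floorZ y)) (IZR (floorZ y) + 1 - y).

Fixpoint Pprod (N : nat) (beta x : R) : R :=
  match N with
  | O => 1
  | S n => Pprod n beta x * Rabs (2 * sin (PI * (INR (S n) * beta + x)))
  end.

Definition cot (y : R) : R := cos y / sin y.

Fixpoint Bsum (alpha : R) (k M : nat) (x : R) : R :=
  match M with
  | O => 0
  | S n => Bsum alpha k n x +
      sin (PI * INR (S n) * dist_int (IZR (cf_q alpha k) * alpha) / IZR (cf_q alpha k))
      * cot (PI * (INR (S n) * (-1) ^ k * IZR (cf_p alpha k) + x) / IZR (cf_q alpha k))
  end.

Definition B (alpha : R) (k M : nat) (x : R) : R :=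
  let qk := IZR (cf_q alpha k) in
  let pk := IZR (cf_p alpha k) in
  ln (Pprod M alpha ((-1) ^ k * x / qk) / Pprod M (pk / qk) ((-1) ^ k * x / qk))
  - Bsum alpha k M x.

(* Ostrowski expansion N = sum_{k<K} b_k q_k : digit conditions *)
Definition ostrowski_digits (alpha : R) (b : nat -> nat) (K : nat) : Prop :=
  (K > 0)%nat ->
  (Z.of_nat (b 0%nat) < cf_a alpha 1)%Z /\
  (forall k, (k < K)%nat -> (Z.of_nat (b k) <= cf_a alpha (S k))%Z) /\
  (forall k, (1 <= k)%nat -> (k < K)%nat ->
      Z.of_nat (b k) = cf_a alpha (S k) -> b (k - 1)%nat = 0%nat).

Definition eps (alpha : R) (b : nat -> nat) (K k : nat) : R :=
  IZR (cf_q alpha k) *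
  fold_right Rplus 0
    (map (fun l => (-1) ^ (k + l) * INR (b l) * dist_int (IZR (cf_q alpha l) * alpha))
         (seq (S k) (K - S k))).

From Stdlib Require Import Reals ZArith Znumtheory Lra Lia List Psatz.
From Coquelicot Require Import Coquelicot.
Open Scope R_scope.

(* Put q = q_k, p = p_k, s = (-1)^k and d = ||q_k al|| = s (q al - p).  As p and q are coprime,
   n s p = q t_n + r_n with residues r_n in [1, q - 1] that are distinct for 1 <= n <= M < q.
   Reducing modulo the integers, the n-th factor of P_M(al, s x/q) / P_M(p/q, s x/q) becomes
   w_n = sin (v_n + h_n) / sin v_n with v_n = PI (r_n + x) / q and h_n = PI n d / q, and the n-th
   cotangent term becomes sin h_n cot v_n = w_n - cos h_n.  So every summand of B equals
   ln w_n - (w_n - 1) - (1 - cos h_n) <= 0, which gives both upper bounds; the shift in (ii) is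
   admissible because the Ostrowski digits keep eps_k(N) between -q ||q_k al|| and
   q ||q_{k+1} al||.  For the lower bound, w_n >= c_k since sin t / t decreases, so
   ln w - (w - 1) >= -4 log (4/c_k) (w - 1)^2, where (w_n - 1)^2 <= 2 (h_n / sin v_n)^2 + h_n^4 / 2
   and h_n <= PI / (a_{k+1} q).  Jordan's inequality bounds 1 / sin^2 v_n by
   q^2 (1/r_n^2 + 1/(q - r_n)^2) / (4 (1 - |x|)^2), and the distinct residues make the sum of the
   brackets at most 4. *)

(** * Elementary inequalities *)

Lemma ln_le_sub_1 w : 0 < w -> ln w <= w - 1.
Proof.
  intro Hw. pose proof (exp_ineq1_le (ln w)) as H. rewrite exp_ln in H; lra.
Qed.

Lemma ln_ge_1_sub_inv w : 0 < w -> 1 - / w <= ln w.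
Proof.
  intro Hw. pose proof (ln_le_sub_1 (/ w) (Rinv_0_lt_compat _ Hw)) as H.
  rewrite ln_Rinv in H; lra.
Qed.

Lemma ln_4_div_gt_1 c : 0 < c -> c < 1 -> 1 < ln (4 / c).
Proof.
  intros Hc Hc1.
  assert (H4 : 1 < ln 4).
  { rewrite <- ln_exp at 1. apply ln_increasing; [apply exp_pos|].
    pose proof exp_le_3; lra. }
  enough (ln 4 < ln (4 / c)) by lra.
  apply ln_increasing; [lra|].
  apply (Rmult_lt_reg_r c); [lra|]. unfold Rdiv. rewrite Rmult_assoc, Rinv_l; lra.
Qed.

Lemma sin_le_id h : 0 <= h -> sin h <= h.
Proof.
  intro Hh. destruct (Req_dec h 0) as [->|Hn]; [rewrite sin_0; lra|].
  left. apply sin_lt_x. lra.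
Qed.

Lemma Rabs_sin_le y : Rabs (sin y) <= Rabs y.
Proof.
  assert (Hpos : forall y, 0 <= y -> Rabs (sin y) <= y).
  { intros z Hz. pose proof (sin_le_id z Hz). pose proof (SIN_bound z).
    destruct (Rle_lt_dec 1 z).
    - apply Rabs_le. lra.
    - assert (0 <= sin z) by (apply sin_ge_0; pose proof PI2_1; lra).
      rewrite Rabs_right; lra. }
  destruct (Rle_lt_dec 0 y) as [Hy|Hy].
  - rewrite (Rabs_right y) by lra. auto.
  - rewrite <- Rabs_Ropp, <- sin_neg, (Rabs_left y) by lra. apply Hpos. lra.
Qed.

Lemma one_sub_cos_le h : 1 - cos h <= h ^ 2 / 2.
Proof.
  replace h with (2 * (h / 2)) at 1 by field. rewrite cos_2a_sin.
  pose proof (Rabs_sin_le (h / 2)) as H.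
  assert (sin (h / 2) ^ 2 <= (h / 2) ^ 2).
  { rewrite <- (pow2_abs (sin _)), <- (pow2_abs (h / 2)).
    apply pow_incr. split; [apply Rabs_pos | exact H]. }
  lra.
Qed.

(* [sin t - t cos t] vanishes at 0 and has derivative [t sin t]. *)
Lemma mul_cos_le_sin t : 0 <= t <= PI -> t * cos t <= sin t.
Proof.
  intro Ht.
  assert (pr : derivable (fun u => sin u - u * cos u)).
  { intro u. apply ex_derive_Reals_0. auto_derive. auto. }
  assert (Hder : forall u, 0 < u < PI -> 0 <= derive_pt _ u (pr u)).
  { intros u Hu. rewrite (derive_pt_eq_0 _ _ (u * sin u) (pr u)).
    - pose proof (sin_gt_0 u (proj1 Hu) (proj2 Hu)). nra.
    - apply is_derive_Reals. auto_derive; auto. ring. }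
  destruct (Req_dec t 0) as [->|Hn]; [rewrite sin_0; lra|].
  pose proof PI_RGT_0 as Hpi.
  pose proof (derive_increasing_interv_var 0 PI _ pr Hpi Hder 0 t) as H.
  simpl in H. rewrite sin_0 in H. specialize (H ltac:(lra) Ht ltac:(lra)). lra.
Qed.

Lemma mul_sin_le_mul_sin a b : 0 < a -> a <= b -> b <= PI -> a * sin b <= b * sin a.
Proof.
  intros Ha Hab Hb.
  destruct (Req_dec a b) as [<-|Hne]; [lra|].
  assert (pr : derivable (fun u => u * sin a - a * sin u)).
  { intro u. apply ex_derive_Reals_0. auto_derive. auto. }
  assert (Hder : forall u, a < u < PI -> 0 <= derive_pt _ u (pr u)).
  { intros u Hu. rewrite (derive_pt_eq_0 _ _ (sin a - a * cos u) (pr u)).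
    - pose proof (mul_cos_le_sin a ltac:(lra)).
      pose proof (cos_decr_1 a u ltac:(lra) ltac:(lra) ltac:(lra) ltac:(lra) ltac:(lra)).
      nra.
    - apply is_derive_Reals. auto_derive; auto. ring. }
  pose proof (derive_increasing_interv_var a PI _ pr ltac:(lra) Hder a b) as H.
  simpl in H. specialize (H ltac:(lra) ltac:(lra) ltac:(lra)). lra.
Qed.

Lemma jordan_ineq v : 0 <= v <= PI / 2 -> 2 * v / PI <= sin v.
Proof.
  intro Hv. pose proof PI_RGT_0 as Hpi.
  destruct (Req_dec v 0) as [->|Hn]; [rewrite sin_0; lra|].
  pose proof (mul_sin_le_mul_sin v (PI / 2) ltac:(lra) ltac:(lra) ltac:(lra)) as H.
  rewrite sin_PI2 in H.
  apply (Rmult_le_reg_r (PI / 2)); [lra|]. field_simplify; lra.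
Qed.

(** * Finite sums *)

Fixpoint sum1 (f : nat -> R) (N : nat) : R :=
  match N with O => 0 | S n => sum1 f n + f (S n) end.

Lemma sum1_ext f g N :
  (forall n, (1 <= n <= N)%nat -> f n = g n) -> sum1 f N = sum1 g N.
Proof.
  induction N as [|N IH]; intros H; simpl; auto.
  rewrite IH, H by (intros; try apply H; lia). reflexivity.
Qed.

Lemma sum1_le f g N :
  (forall n, (1 <= n <= N)%nat -> f n <= g n) -> sum1 f N <= sum1 g N.
Proof.
  induction N as [|N IH]; intros H; simpl; [lra|].
  pose proof (IH ltac:(intros; apply H; lia)). pose proof (H (S N) ltac:(lia)). lra.
Qed.

Lemma sum1_add f g N : sum1 (fun n => f n + g n) N = sum1 f N + sum1 g N.
Proof. induction N as [|N IH]; simpl; [lra|]. rewrite IH. lra. Qed.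

Lemma sum1_sub f g N : sum1 (fun n => f n - g n) N = sum1 f N - sum1 g N.
Proof. induction N as [|N IH]; simpl; [lra|]. rewrite IH. lra. Qed.

Lemma sum1_scal c f N : sum1 (fun n => c * f n) N = c * sum1 f N.
Proof. induction N as [|N IH]; simpl; [lra|]. rewrite IH. lra. Qed.

Lemma sum1_const c N : sum1 (fun _ => c) N = INR N * c.
Proof. induction N as [|N IH]; simpl sum1; [simpl; lra|]. rewrite IH, S_INR. lra. Qed.

Lemma sum1_exchange (g : nat -> nat -> R) M N :
  sum1 (fun n => sum1 (g n) N) M = sum1 (fun m => sum1 (fun n => g n m) M) N.
Proof.
  induction M as [|M IH]; simpl.
  - induction N; simpl; lra.
  - rewrite IH, <- sum1_add. reflexivity.
Qed.

Definition indicator (a b : nat) : R := if Nat.eqb a b then 1 else 0.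

Lemma sum1_indicator F N m :
  (1 <= m <= N)%nat -> sum1 (fun n => indicator m n * F n) N = F m.
Proof.
  induction N as [|N IH]; intros Hm; [lia|]. simpl. unfold indicator at 2.
  destruct (Nat.eqb_spec m (S N)) as [->|Hne].
  - rewrite (sum1_ext _ (fun _ => 0)), sum1_const; [lra|].
    intros n Hn. unfold indicator. destruct (Nat.eqb_spec (S N) n); [lia|lra].
  - rewrite IH by lia. lra.
Qed.

Lemma sum1_indicator_inj_le (r : nat -> nat) M m :
  (forall n1 n2, (1 <= n1 <= M)%nat -> (1 <= n2 <= M)%nat -> r n1 = r n2 -> n1 = n2) ->
  0 <= sum1 (fun n => indicator (r n) m) M <= 1.
Proof.
  induction M as [|M IH]; intros Hinj; simpl; [lra|].
  destruct (Nat.eqb_spec (r (S M)) m) as [E|E].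
  - assert (Hm : indicator (r (S M)) m = 1)
      by (unfold indicator; rewrite E, Nat.eqb_refl; reflexivity).
    rewrite Hm, (sum1_ext _ (fun _ => 0)), sum1_const; [split; lra|].
    intros n Hn. unfold indicator. destruct (Nat.eqb_spec (r n) m); [|lra].
    assert (n = S M) by (apply Hinj; lia). lia.
  - assert (Hm : indicator (r (S M)) m = 0)
      by (unfold indicator; destruct (Nat.eqb_spec (r (S M)) m); easy).
    pose proof (IH ltac:(intros; apply Hinj; lia)). split; lra.
Qed.

(* Each [F m] is counted at most once on the left. *)
Lemma sum1_comp_inj_le (r : nat -> nat) (F : nat -> R) M N :
  (forall m, 0 <= F m) ->
  (forall n, (1 <= n <= M)%nat -> (1 <= r n <= N)%nat) ->
  (forall n1 n2, (1 <= n1 <= M)%nat -> (1 <= n2 <= M)%nat -> r n1 = r n2 -> n1 = n2) ->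
  sum1 (fun n => F (r n)) M <= sum1 F N.
Proof.
  intros HF Hr Hinj.
  rewrite (sum1_ext _ (fun n => sum1 (fun m => indicator (r n) m * F m) N))
    by (intros; rewrite sum1_indicator; auto).
  rewrite sum1_exchange. apply sum1_le. intros m _.
  rewrite (sum1_ext _ (fun n => F m * indicator (r n) m)) by (intros; lra).
  rewrite sum1_scal.
  pose proof (sum1_indicator_inj_le r M m Hinj). pose proof (HF m). nra.
Qed.

Lemma sum1_inv_sq_le_2 N : sum1 (fun m => / INR m ^ 2) N <= 2.
Proof.
  enough (H : forall N, sum1 (fun m => / INR m ^ 2) (S N) <= 2 - / INR (S N)).
  { destruct N; [simpl; lra|]. pose proof (H N).
    assert (0 < / INR (S N)) by (apply Rinv_0_lt_compat, lt_0_INR; lia). lra. }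
  clear N. induction N as [|N IH]; [simpl; lra|].
  change (sum1 (fun m => / INR m ^ 2) (S (S N)))
    with (sum1 (fun m => / INR m ^ 2) (S N) + / INR (S (S N)) ^ 2).
  rewrite (S_INR (S N)).
  assert (Ht : 1 <= INR (S N)) by (apply (le_INR 1); lia).
  assert (/ (INR (S N) + 1) ^ 2 <= / INR (S N) - / (INR (S N) + 1)).
  { set (t := INR (S N)) in *. apply (Rmult_le_reg_r (t * (t + 1) ^ 2)); [nra|].
    field_simplify; lra. }
  lra.
Qed.

(** * Continued fractions *)

Definition cf_p_prev (al : R) (j : nat) : Z := fst (snd (conv_pair al j)).
Definition cf_q_prev (al : R) (j : nat) : Z := snd (snd (conv_pair al j)).

Lemma conv_pair_0 al :
  cf_p al 0 = cf_a al 0 /\ cf_q al 0 = 1%Z /\ cf_p_prev al 0 = 1%Z /\ cf_q_prev al 0 = 0%Z.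
Proof. unfold cf_p, cf_q, cf_p_prev, cf_q_prev. simpl. auto. Qed.

Lemma conv_pair_S al j :
  cf_p al (S j) = (cf_a al (S j) * cf_p al j + cf_p_prev al j)%Z /\
  cf_q al (S j) = (cf_a al (S j) * cf_q al j + cf_q_prev al j)%Z /\
  cf_p_prev al (S j) = cf_p al j /\ cf_q_prev al (S j) = cf_q al j.
Proof.
  unfold cf_p, cf_q, cf_p_prev, cf_q_prev. simpl.
  destruct (conv_pair al j) as [[p q] [p' q']]. simpl. auto.
Qed.

Lemma pow_m1_cases j : (-1) ^ j = 1 \/ (-1) ^ j = -1.
Proof.
  induction j as [|j IH]; simpl; [auto|].
  destruct IH as [-> | ->]; [right | left]; ring.
Qed.

Lemma cf_det al j :
  IZR (cf_p al j * cf_q_prev al j - cf_p_prev al j * cf_q al j) = - (-1) ^ j.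
Proof.
  induction j as [|j IH].
  - destruct (conv_pair_0 al) as (_ & -> & -> & ->). rewrite Z.mul_0_r, Z.mul_1_l. reflexivity.
  - destruct (conv_pair_S al j) as (-> & -> & -> & ->).
    rewrite minus_IZR, !mult_IZR, !plus_IZR, !mult_IZR.
    rewrite minus_IZR, !mult_IZR in IH. simpl pow. nra.
Qed.

Lemma cf_rel_prime al j : rel_prime (cf_q al j) (cf_p al j).
Proof.
  apply bezout_rel_prime.
  pose proof (cf_det al j) as H.
  destruct (pow_m1_cases j) as [E|E]; rewrite E in H.
  - apply (Bezout_intro _ _ _ (cf_p_prev al j) (- cf_q_prev al j)).
    apply eq_IZR. rewrite plus_IZR, !mult_IZR, opp_IZR.
    rewrite minus_IZR, !mult_IZR in H. lra.
  - apply (Bezout_intro _ _ _ (- cf_p_prev al j) (cf_q_prev al j)).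
    apply eq_IZR. rewrite plus_IZR, !mult_IZR, opp_IZR.
    rewrite minus_IZR, !mult_IZR in H. lra.
Qed.

Lemma cf_a_le_cquot al j : IZR (cf_a al j) <= cquot al j < IZR (cf_a al j) + 1.
Proof. unfold cf_a, floorZ. pose proof (base_Int_part (cquot al j)). lra. Qed.

Section Irrational.

Variable al : R.
Hypothesis al_irr : irrational al.

(* Irrationality makes every floor strict, so the complete quotients stay finite and
   [al = (p_j y + p_{j-1}) / (q_j y + q_{j-1})] with [y = cquot al (S j)]. *)
Lemma cf_invariant j :
  IZR (cf_a al j) < cquot al j /\
  al * (IZR (cf_q al j) * cquot al (S j) + IZR (cf_q_prev al j)) =
    IZR (cf_p al j) * cquot al (S j) + IZR (cf_p_prev al j) /\
  (1 <= cf_q al j)%Z /\ (0 <= cf_q_prev al j)%Z.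
Proof.
  induction j as [|j (Hlt & Hid & Hq & Hqm)].
  - destruct (conv_pair_0 al) as (-> & -> & -> & ->).
    pose proof (cf_a_le_cquot al 0) as [Hl Hu]. simpl cquot in *.
    assert (Hne : al <> IZR (cf_a al 0)).
    { intro E. apply (al_irr (cf_a al 0) 1%Z); [lia|]. unfold Rdiv. rewrite Rinv_1. lra. }
    change (floorZ al) with (cf_a al 0).
    repeat split; try lia; try lra. field. lra.
  - destruct (conv_pair_S al j) as (-> & -> & -> & ->).
    pose proof (cf_a_le_cquot al j) as [Hl Hu].
    pose proof (cf_a_le_cquot al (S j)) as [Hl' Hu'].
    assert (Hy : 1 < cquot al (S j)).
    { change (1 < / (cquot al j - IZR (cf_a al j))).
      replace 1 with (/ 1) by lra. apply Rinv_lt_contravar; lra. }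
    set (y := cquot al (S j)) in *. set (a' := cf_a al (S j)) in *.
    assert (Ha' : (0 < a')%Z) by (apply lt_IZR; lra).
    assert (Hstrict : IZR a' < y).
    { destruct (Rle_lt_or_eq_dec _ _ Hl') as [h|h]; auto. exfalso.
      apply (al_irr (a' * cf_p al j + cf_p_prev al j)%Z (a' * cf_q al j + cf_q_prev al j)%Z);
        [lia|].
      assert (IZR (a' * cf_q al j + cf_q_prev al j)%Z <> 0) by (apply not_0_IZR; lia).
      rewrite <- h in Hid. rewrite !plus_IZR, !mult_IZR in *.
      field_simplify_eq; auto. lra. }
    repeat split; try nia; auto.
    change (cquot al (S (S j))) with (/ (y - IZR a')).
    rewrite !plus_IZR, !mult_IZR.
    apply (Rmult_eq_reg_r (y - IZR a')); [|lra].
    field_simplify; lra.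
Qed.

Lemma cquot_S_gt_1 j : 1 < cquot al (S j).
Proof.
  destruct (cf_invariant j) as (Hlt & _). pose proof (cf_a_le_cquot al j).
  change (1 < / (cquot al j - IZR (cf_a al j))).
  replace 1 with (/ 1) by lra. apply Rinv_lt_contravar; lra.
Qed.

Lemma cf_a_S_ge_1 j : 1 <= IZR (cf_a al (S j)).
Proof.
  pose proof (cquot_S_gt_1 j). pose proof (cf_a_le_cquot al (S j)).
  apply IZR_le. enough (0 < cf_a al (S j))%Z by lia. apply lt_IZR. lra.
Qed.

Lemma cf_q_ge_1 j : 1 <= IZR (cf_q al j).
Proof. apply IZR_le, (cf_invariant j). Qed.

Lemma cf_q_prev_ge_0 j : 0 <= IZR (cf_q_prev al j).
Proof. apply IZR_le, (cf_invariant j). Qed.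

Lemma cf_q_prev_ge_1 j : (1 <= j)%nat -> 1 <= IZR (cf_q_prev al j).
Proof.
  intro Hj. destruct j as [|j]; [lia|].
  destruct (conv_pair_S al j) as (_ & _ & _ & ->). apply cf_q_ge_1.
Qed.

(* [cf_err al j] is [|q_j al - p_j|], the distance [||q_j al||] once [j >= 1]. *)
Definition cf_err j : R := / (IZR (cf_q al j) * cquot al (S j) + IZR (cf_q_prev al j)).

Lemma cf_err_denom_gt_1 j : 1 < IZR (cf_q al j) * cquot al (S j) + IZR (cf_q_prev al j).
Proof. pose proof (cf_q_ge_1 j). pose proof (cf_q_prev_ge_0 j). pose proof (cquot_S_gt_1 j). nra. Qed.

Lemma cf_err_pos j : 0 < cf_err j.
Proof. apply Rinv_0_lt_compat. pose proof (cf_err_denom_gt_1 j). lra. Qed.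

Lemma cf_q_mul_sub_p j : IZR (cf_q al j) * al - IZR (cf_p al j) = (-1) ^ j * cf_err j.
Proof.
  destruct (cf_invariant j) as (_ & Hid & _ & _).
  pose proof (cf_err_denom_gt_1 j). pose proof (cf_det al j) as Hdet.
  rewrite minus_IZR, !mult_IZR in Hdet. unfold cf_err.
  apply (Rmult_eq_reg_r (IZR (cf_q al j) * cquot al (S j) + IZR (cf_q_prev al j))); [|lra].
  rewrite Rmult_assoc, Rinv_l by lra.
  transitivity (IZR (cf_q al j) * (al * (IZR (cf_q al j) * cquot al (S j) + IZR (cf_q_prev al j)))
     - IZR (cf_p al j) * (IZR (cf_q al j) * cquot al (S j) + IZR (cf_q_prev al j))); [ring|].
  rewrite Hid. nra.
Qed.

Lemma cf_a_mul_q_mul_err_lt_1 j : IZR (cf_a al (S j)) * IZR (cf_q al j) * cf_err j < 1.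
Proof.
  destruct (cf_invariant (S j)) as (Hlt & _).
  pose proof (cf_q_ge_1 j). pose proof (cf_q_prev_ge_0 j). pose proof (cf_err_denom_gt_1 j).
  unfold cf_err. apply (Rmult_lt_reg_r (IZR (cf_q al j) * cquot al (S j) + IZR (cf_q_prev al j)));
    [lra|].
  rewrite Rmult_assoc, Rinv_l by lra. nra.
Qed.

Lemma cf_err_lt_half j : (1 <= j)%nat -> cf_err j < / 2.
Proof.
  intro Hj. pose proof (cf_q_ge_1 j). pose proof (cf_q_prev_ge_1 j Hj).
  pose proof (cquot_S_gt_1 j).
  apply Rinv_lt_contravar; nra.
Qed.

Lemma cf_err_rec j : cf_err j = IZR (cf_a al (S (S j))) * cf_err (S j) + cf_err (S (S j)).
Proof.
  pose proof (cf_q_mul_sub_p j) as D0.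
  pose proof (cf_q_mul_sub_p (S j)) as D1.
  pose proof (cf_q_mul_sub_p (S (S j))) as D2.
  destruct (conv_pair_S al (S j)) as (E1 & E2 & _ & _).
  destruct (conv_pair_S al j) as (_ & _ & E3 & E4).
  rewrite E1, E2, E3, E4, !plus_IZR, !mult_IZR in D2. simpl pow in *.
  destruct (pow_m1_cases j) as [E|E]; rewrite E in *; nra.
Qed.

Lemma cf_q_S_mul_err_le_1 j : IZR (cf_q al (S j)) * cf_err j <= 1.
Proof.
  pose proof (cf_err_denom_gt_1 j). pose proof (cf_q_ge_1 j).
  pose proof (cf_a_le_cquot al (S j)).
  destruct (conv_pair_S al j) as (_ & -> & _ & _). rewrite plus_IZR, mult_IZR.
  unfold cf_err. apply (Rmult_le_reg_r (IZR (cf_q al j) * cquot al (S j) + IZR (cf_q_prev al j)));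
    [lra|].
  rewrite Rmult_assoc, Rinv_l by lra. nra.
Qed.

Lemma dist_int_cf_q j : (1 <= j)%nat -> dist_int (IZR (cf_q al j) * al) = cf_err j.
Proof.
  intro Hj. pose proof (cf_q_mul_sub_p j) as H.
  pose proof (cf_err_lt_half j Hj). pose proof (cf_err_pos j).
  unfold dist_int, floorZ.
  destruct (pow_m1_cases j) as [E|E]; rewrite E in H.
  - rewrite <- (Int_part_spec _ (cf_p al j)) by lra.
    unfold Rmin; destruct (Rle_dec _ _); lra.
  - rewrite <- (Int_part_spec _ (cf_p al j - 1)) by (rewrite minus_IZR; lra).
    rewrite minus_IZR. unfold Rmin; destruct (Rle_dec _ _); lra.
Qed.

End Irrational.

(** * Reduction modulo [q_k] *)

Lemma rel_prime_mul_divide_small q c n :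
  rel_prime q c -> (q | n * c)%Z -> (- q < n < q)%Z -> n = 0%Z.
Proof.
  intros Hqc Hdiv Hn. rewrite Z.mul_comm in Hdiv.
  destruct (Gauss _ _ _ Hdiv Hqc) as [e ->].
  destruct (Z.lt_trichotomy e 0) as [He | [-> | He]]; nia.
Qed.

Lemma rel_prime_mul_sign q c s :
  (s = 1 \/ s = -1)%Z -> rel_prime q c -> rel_prime q (s * c).
Proof.
  intros Hs Hqc. apply bezout_rel_prime.
  destruct (rel_prime_bezout _ _ Hqc) as [u v Huv].
  apply (Bezout_intro _ _ _ u (s * v)). destruct Hs as [-> | ->]; lia.
Qed.

Lemma mul_mod_rel_prime_range q c n :
  rel_prime q c -> (0 < n < q)%Z -> (1 <= (n * c) mod q <= q - 1)%Z.
Proof.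
  intros Hqc Hn. pose proof (Z.mod_pos_bound (n * c) q ltac:(lia)).
  enough ((n * c) mod q <> 0)%Z by lia. intro E.
  apply Z.mod_divide in E; [|lia].
  pose proof (rel_prime_mul_divide_small q c n Hqc E ltac:(lia)). lia.
Qed.

Lemma mul_mod_rel_prime_inj q c n1 n2 :
  rel_prime q c -> (0 < n1 < q)%Z -> (0 < n2 < q)%Z ->
  ((n1 * c) mod q = (n2 * c) mod q)%Z -> n1 = n2.
Proof.
  intros Hqc H1 H2 E.
  pose proof (Z.div_mod (n1 * c) q ltac:(lia)).
  pose proof (Z.div_mod (n2 * c) q ltac:(lia)).
  enough ((n1 - n2)%Z = 0%Z) by lia.
  apply (rel_prime_mul_divide_small q c); [auto| |lia].
  exists ((n1 * c) / q - (n2 * c) / q)%Z. lia.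
Qed.

Lemma sin_add_IZR_mul_PI y t : sin (y + IZR t * PI) = cos (IZR t * PI) * sin y.
Proof. rewrite sin_plus, (sin_eq_0_1 (IZR t * PI)) by (exists t; auto). ring. Qed.

Lemma cos_add_IZR_mul_PI y t : cos (y + IZR t * PI) = cos (IZR t * PI) * cos y.
Proof. rewrite cos_plus, (sin_eq_0_1 (IZR t * PI)) by (exists t; auto). ring. Qed.

Lemma Rabs_cos_IZR_mul_PI t : Rabs (cos (IZR t * PI)) = 1.
Proof.
  pose proof (sin2_cos2 (IZR t * PI)) as H.
  rewrite (sin_eq_0_1 (IZR t * PI)) in H by (exists t; auto).
  unfold Rsqr in H. pose proof (Rabs_pos (cos (IZR t * PI))).
  assert (Rabs (cos (IZR t * PI)) * Rabs (cos (IZR t * PI)) = 1)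
    by (rewrite <- Rabs_mult, Rabs_right; lra).
  nra.
Qed.

Lemma Rabs_sin_add_IZR_mul_PI y t : Rabs (sin (y + IZR t * PI)) = Rabs (sin y).
Proof. rewrite sin_add_IZR_mul_PI, Rabs_mult, Rabs_cos_IZR_mul_PI. ring. Qed.

Lemma cot_add_IZR_mul_PI y t : cot (y + IZR t * PI) = cot y.
Proof.
  unfold cot. rewrite sin_add_IZR_mul_PI, cos_add_IZR_mul_PI.
  assert (cos (IZR t * PI) <> 0).
  { intro E. pose proof (Rabs_cos_IZR_mul_PI t). rewrite E, Rabs_R0 in *. lra. }
  unfold Rdiv. rewrite Rinv_mult.
  replace (cos (IZR t * PI) * cos y * (/ cos (IZR t * PI) * / sin y))
    with (cos (IZR t * PI) * / cos (IZR t * PI) * (cos y * / sin y)) by ring.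
  rewrite Rinv_r by auto. ring.
Qed.

(* With [q al - p = s d] and [n s p = q t + m], the point [n al + s x / q] equals
   [s (m + x + n d) / q] modulo the integers. *)
Lemma Rabs_2_sin_reduce (al p q d s x n m : R) (t : Z) :
  (s = 1 \/ s = -1) -> q <> 0 -> q * al - p = s * d -> n * s * p = q * IZR t + m ->
  Rabs (2 * sin (PI * (n * al + s * x / q))) =
    2 * Rabs (sin (PI * (m + x) / q + PI * (n * d) / q)).
Proof.
  intros Hs Hq Hal Hm.
  assert (E : PI * (n * al + s * x / q) = s * (PI * (m + x) / q + PI * (n * d) / q + IZR t * PI)).
  { replace al with ((p + s * d) / q) by (field_simplify_eq; lra).
    replace m with (n * s * p - q * IZR t) by lra.
    destruct Hs as [-> | ->]; field; auto. }
  rewrite E, Rabs_mult, (Rabs_right 2) by lra. f_equal.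
  rewrite <- (Rabs_sin_add_IZR_mul_PI (PI * (m + x) / q + PI * (n * d) / q) t).
  set (w := PI * (m + x) / q + PI * (n * d) / q + IZR t * PI).
  destruct Hs as [-> | ->].
  - rewrite Rmult_1_l. reflexivity.
  - replace (-1 * w) with (- w) by ring. rewrite sin_neg, Rabs_Ropp. reflexivity.
Qed.

Lemma cot_reduce (p q s x n m : R) (t : Z) :
  q <> 0 -> n * s * p = q * IZR t + m ->
  cot (PI * (n * s * p + x) / q) = cot (PI * (m + x) / q).
Proof.
  intros Hq Hm. rewrite <- (cot_add_IZR_mul_PI (PI * (m + x) / q) t). f_equal. rewrite Hm. field. auto.
Qed.

Lemma sign_IZR k : exists s : Z, IZR s = (-1) ^ k /\ (s = 1 \/ s = -1)%Z.
Proof.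
  induction k as [|k (s & Hs & Hs1)]; [exists 1%Z; simpl; auto|].
  exists (- s)%Z. rewrite opp_IZR, Hs. simpl. split; [ring | lia].
Qed.

Lemma cf_residues al k M : INR M < IZR (cf_q al k) ->
  exists (r : nat -> nat) (t : nat -> Z),
    (forall n, (1 <= n <= M)%nat ->
       (1 <= r n < Z.to_nat (cf_q al k))%nat /\
       INR n * (-1) ^ k * IZR (cf_p al k) = IZR (cf_q al k) * IZR (t n) + INR (r n)) /\
    (forall n1 n2, (1 <= n1 <= M)%nat -> (1 <= n2 <= M)%nat -> r n1 = r n2 -> n1 = n2).
Proof.
  intros HM. destruct (sign_IZR k) as (s & Hs & Hs1).
  set (Q := cf_q al k) in *. set (c := (s * cf_p al k)%Z).
  pose proof (rel_prime_mul_sign _ _ _ Hs1 (cf_rel_prime al k)) as Hc. fold Q c in Hc.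
  assert (HnQ : forall n, (1 <= n <= M)%nat -> (0 < Z.of_nat n < Q)%Z).
  { intros n Hn. split; [lia|]. apply lt_IZR. rewrite <- INR_IZR_INZ.
    pose proof (le_INR n M ltac:(lia)). lra. }
  exists (fun n => Z.to_nat ((Z.of_nat n * c) mod Q)), (fun n => ((Z.of_nat n * c) / Q)%Z).
  split.
  - intros n Hn. pose proof (mul_mod_rel_prime_range Q c _ Hc (HnQ n Hn)) as Hm.
    split; [lia|].
    rewrite (INR_IZR_INZ (Z.to_nat _)), Z2Nat.id by lia.
    rewrite <- mult_IZR, <- plus_IZR, <- Z.div_mod by lia.
    unfold c. rewrite !mult_IZR, <- INR_IZR_INZ, Hs. ring.
  - intros n1 n2 H1 H2 E.
    pose proof (mul_mod_rel_prime_range Q c _ Hc (HnQ n1 H1)).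
    pose proof (mul_mod_rel_prime_range Q c _ Hc (HnQ n2 H2)).
    apply Nat2Z.inj, (mul_mod_rel_prime_inj Q c); auto. lia.
Qed.

Lemma Rabs_2_sin_pos y : sin y <> 0 -> 0 < Rabs (2 * sin y).
Proof. intro H. apply Rabs_pos_lt. intro E. apply H. lra. Qed.

Lemma Pprod_pos M b X :
  (forall n, (1 <= n <= M)%nat -> sin (PI * (INR n * b + X)) <> 0) -> 0 < Pprod M b X.
Proof.
  induction M as [|M IH]; intros H; cbn [Pprod]; [lra|].
  apply Rmult_lt_0_compat; [apply IH; intros; apply H; lia|].
  apply Rabs_2_sin_pos, H. lia.
Qed.

Lemma ln_Pprod_ratio M b1 b2 X (w : nat -> R) :
  (forall n, (1 <= n <= M)%nat ->
     0 < w n /\ sin (PI * (INR n * b2 + X)) <> 0 /\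
     Rabs (2 * sin (PI * (INR n * b1 + X))) = w n * Rabs (2 * sin (PI * (INR n * b2 + X)))) ->
  ln (Pprod M b1 X / Pprod M b2 X) = sum1 (fun n => ln (w n)) M.
Proof.
  intros H.
  assert (Hb1 : forall n, (1 <= n <= M)%nat -> sin (PI * (INR n * b1 + X)) <> 0).
  { intros n Hn E. destruct (H n Hn) as (Hw & Hs & Heq).
    rewrite E, Rmult_0_r, Rabs_R0 in Heq.
    assert (0 < Rabs (2 * sin (PI * (INR n * b2 + X)))) by (apply Rabs_2_sin_pos; auto).
    nra. }
  induction M as [|M IH]; cbn [Pprod sum1].
  - rewrite Rdiv_1_r. apply ln_1.
  - destruct (H (S M) ltac:(lia)) as (Hw & Hs & ->).
    pose proof (Pprod_pos M b1 X ltac:(intros; apply Hb1; lia)).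
    pose proof (Pprod_pos M b2 X ltac:(intros; apply H; lia)).
    assert (0 < Rabs (2 * sin (PI * (INR (S M) * b2 + X)))) by (apply Rabs_2_sin_pos; auto).
    replace (Pprod M b1 X * (w (S M) * Rabs (2 * sin (PI * (INR (S M) * b2 + X)))) /
       (Pprod M b2 X * Rabs (2 * sin (PI * (INR (S M) * b2 + X)))))
      with (Pprod M b1 X / Pprod M b2 X * w (S M)) by (field; lra).
    rewrite ln_mult, IH; [reflexivity | | | apply Rdiv_lt_0_compat | ]; auto;
      intros; try apply H; try apply Hb1; lia.
Qed.

(** * The summands of [B] *)

Definition bterm (v h : R) : R := ln (sin (v + h) / sin v) - sin h * cot v.

Lemma sin_PI_mul_div_pos y q : 0 < y < q -> 0 < sin (PI * y / q).
Proof.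
  intros Hy. pose proof PI_RGT_0. apply sin_gt_0.
  - apply Rdiv_lt_0_compat; nra.
  - apply (Rmult_lt_reg_r q); [lra|]. unfold Rdiv. rewrite Rmult_assoc, Rinv_l; nra.
Qed.

Lemma sin_residue_pos q m x s :
  1 <= m <= q - 1 -> -1 < x -> 0 <= s -> x + s < 1 ->
  0 < sin (PI * (m + x) / q) /\ 0 < sin (PI * (m + x) / q + PI * s / q).
Proof.
  intros Hm Hx Hs Hxs. split; [apply sin_PI_mul_div_pos; lra|].
  replace (PI * (m + x) / q + PI * s / q) with (PI * (m + x + s) / q) by (field; lra).
  apply sin_PI_mul_div_pos. lra.
Qed.

Lemma Bsum_eq_sum1 al k M x : Bsum al k M x = sum1 (fun n =>
  sin (PI * INR n * dist_int (IZR (cf_q al k) * al) / IZR (cf_q al k)) *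
  cot (PI * (INR n * (-1) ^ k * IZR (cf_p al k) + x) / IZR (cf_q al k))) M.
Proof. induction M as [|M IH]; simpl; [reflexivity|]. rewrite IH. reflexivity. Qed.

Lemma B_eq_sum_bterm_of_residues al k M x (r : nat -> nat) (t : nat -> Z) :
  irrational al -> (1 <= k)%nat -> -1 < x -> x + INR M * cf_err al k < 1 ->
  (forall n, (1 <= n <= M)%nat ->
     1 <= INR (r n) <= IZR (cf_q al k) - 1 /\
     INR n * (-1) ^ k * IZR (cf_p al k) = IZR (cf_q al k) * IZR (t n) + INR (r n)) ->
  B al k M x = sum1 (fun n => bterm (PI * (INR (r n) + x) / IZR (cf_q al k))
                                   (PI * (INR n * cf_err al k) / IZR (cf_q al k))) M.
Proof.
  intros Hirr Hk Hx HxM Hr.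
  pose proof (cf_q_ge_1 al Hirr k) as Hq. pose proof (cf_err_pos al Hirr k) as Hd.
  pose proof (cf_q_mul_sub_p al Hirr k) as Hal.
  set (q := IZR (cf_q al k)) in *. set (p := IZR (cf_p al k)) in *.
  set (d := cf_err al k) in *. set (s := (-1) ^ k) in *.
  assert (Hs : s = 1 \/ s = -1) by apply pow_m1_cases.
  assert (Hq0 : q <> 0) by (apply Rgt_not_eq; lra).
  assert (Hterm : forall n, (1 <= n <= M)%nat ->
    let v := PI * (INR (r n) + x) / q in let h := PI * (INR n * d) / q in
    0 < sin v /\ 0 < sin (v + h) /\
    Rabs (2 * sin (PI * (INR n * al + s * x / q))) = 2 * Rabs (sin (v + h)) /\
    Rabs (2 * sin (PI * (INR n * (p / q) + s * x / q))) = 2 * Rabs (sin v)).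
  { intros n Hn v h. destruct (Hr n Hn) as [Hrn Hnt].
    assert (Hnd : 0 <= INR n * d <= INR M * d).
    { pose proof (le_INR n M ltac:(lia)). pose proof (pos_INR n). split; nra. }
    destruct (sin_residue_pos q (INR (r n)) x (INR n * d)) as [Hv Hvh]; try lra.
    repeat split; auto.
    - apply (Rabs_2_sin_reduce al p q d s x (INR n) (INR (r n)) (t n)); auto.
    - rewrite (Rabs_2_sin_reduce (p / q) p q 0 s x (INR n) (INR (r n)) (t n)); auto.
      + unfold v. do 3 f_equal. field. auto.
      + field. auto. }
  unfold B. fold q p s.
  rewrite (ln_Pprod_ratio M al (p / q) (s * x / q)
    (fun n => sin (PI * (INR (r n) + x) / q + PI * (INR n * d) / q) / sin (PI * (INR (r n) + x) / q))).
  2:{ intros n Hn. destruct (Hterm n Hn) as (Hv & Hvh & E1 & E2).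
      split; [apply Rdiv_lt_0_compat; lra|]. split.
      - intro E. rewrite E, Rmult_0_r, Rabs_R0, Rabs_right in E2; lra.
      - rewrite E1, E2, !Rabs_right by lra. field. lra. }
  rewrite Bsum_eq_sum1, <- sum1_sub. apply sum1_ext. intros n Hn.
  destruct (Hr n Hn) as [_ Hnt]. unfold bterm. f_equal. f_equal.
  - rewrite dist_int_cf_q by auto. fold q d. f_equal. lra.
  - apply (cot_reduce p q s x (INR n) (INR (r n)) (t n)); auto.
Qed.

Lemma INR_bounds_of_lt (m Q : nat) : (1 <= m < Q)%nat -> 1 <= INR m <= INR Q - 1.
Proof.
  intro H. pose proof (le_INR (S m) Q ltac:(lia)) as HS. rewrite S_INR in HS.
  split; [apply (le_INR 1); lia | lra].
Qed.

Lemma B_eq_sum_bterm al k M x :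
  irrational al -> (1 <= k)%nat -> INR M < IZR (cf_q al k) ->
  -1 < x -> x + INR M * cf_err al k < 1 ->
  exists (Q : nat) (r : nat -> nat),
    INR Q = IZR (cf_q al k) /\
    (forall n, (1 <= n <= M)%nat -> (1 <= r n < Q)%nat) /\
    (forall n1 n2, (1 <= n1 <= M)%nat -> (1 <= n2 <= M)%nat -> r n1 = r n2 -> n1 = n2) /\
    B al k M x = sum1 (fun n => bterm (PI * (INR (r n) + x) / INR Q)
                                     (PI * (INR n * cf_err al k) / INR Q)) M.
Proof.
  intros Hirr Hk HM Hx HxM.
  destruct (cf_residues al k M HM) as (r & t & Hr & Hinj).
  pose proof (cf_q_ge_1 al Hirr k) as Hq.
  assert (HQ : INR (Z.to_nat (cf_q al k)) = IZR (cf_q al k))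
    by (rewrite INR_IZR_INZ, Z2Nat.id; [reflexivity | apply le_IZR; lra]).
  exists (Z.to_nat (cf_q al k)), r. rewrite HQ.
  split; [reflexivity|]. split; [intros n Hn; apply Hr, Hn|]. split; [exact Hinj|].
  apply (B_eq_sum_bterm_of_residues al k M x r t); auto.
  intros n Hn. destruct (Hr n Hn) as [Hrn Hnt]. split; [|exact Hnt].
  rewrite <- HQ. apply INR_bounds_of_lt, Hrn.
Qed.

Lemma sin_add_div_sin v h : sin v <> 0 -> sin (v + h) / sin v = cos h + sin h * cot v.
Proof. intro Hv. rewrite sin_plus. unfold cot. field. auto. Qed.

(* [ln w <= w - 1] and [cos h <= 1]. *)
Lemma bterm_nonpos v h : 0 < sin v -> 0 < sin (v + h) -> bterm v h <= 0.
Proof.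
  intros Hv Hvh. unfold bterm.
  pose proof (ln_le_sub_1 _ (Rdiv_lt_0_compat _ _ Hvh Hv)) as H.
  rewrite sin_add_div_sin in H at 2 by lra. pose proof (COS_bound h). lra.
Qed.

Lemma ln_sub_ge_sq w c : 0 < c < 1 -> c <= w -> - 4 * ln (4 / c) * (w - 1) ^ 2 <= ln w - (w - 1).
Proof.
  intros Hc Hcw. pose proof (ln_4_div_gt_1 c (proj1 Hc) (proj2 Hc)) as HL.
  destruct (Rle_lt_dec (/ 2) w) as [Hw|Hw].
  - pose proof (ln_ge_1_sub_inv w ltac:(lra)).
    assert (1 - / w >= (w - 1) - 2 * (w - 1) ^ 2).
    { apply Rle_ge, (Rmult_le_reg_r w); [lra|].
      replace ((1 - / w) * w) with (w - 1) by (field; lra).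
      pose proof (Rmult_le_pos ((w - 1) ^ 2) (2 * w - 1) (pow2_ge_0 _) ltac:(lra)). nra. }
    pose proof (Rmult_le_pos ((w - 1) ^ 2) (4 * ln (4 / c) - 2) (pow2_ge_0 _) ltac:(lra)).
    nra.
  - assert (ln c <= ln w).
    { destruct (Req_dec c w) as [->|]; [lra|]. apply Rlt_le, ln_increasing; lra. }
    assert (ln (4 / c) = ln 4 - ln c).
    { unfold Rdiv. rewrite ln_mult, ln_Rinv; try lra. apply Rinv_0_lt_compat; lra. }
    assert (0 < ln 4) by (rewrite <- ln_1; apply ln_increasing; lra).
    assert (1 <= 4 * (w - 1) ^ 2) by nra.
    pose proof (Rmult_le_pos (ln (4 / c)) (4 * (w - 1) ^ 2 - 1) ltac:(lra) ltac:(lra)).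
    nra.
Qed.

Lemma sq_sin_mul_cot_le h v : sin v <> 0 -> (sin h * cot v) ^ 2 <= h ^ 2 / sin v ^ 2.
Proof.
  intro Hv. unfold cot.
  assert (Hh : sin h ^ 2 <= h ^ 2).
  { rewrite <- (pow2_abs (sin h)), <- (pow2_abs h). apply pow_incr.
    split; [apply Rabs_pos | apply Rabs_sin_le]. }
  assert (Hc : cos v ^ 2 <= 1) by (pose proof (COS_bound v); nra).
  assert (Hs : 0 < sin v ^ 2) by (rewrite <- Rsqr_pow2; apply Rsqr_pos_lt; auto).
  replace ((sin h * (cos v / sin v)) ^ 2) with (sin h ^ 2 * cos v ^ 2 / sin v ^ 2)
    by (field; auto).
  unfold Rdiv. apply Rmult_le_compat_r; [left; apply Rinv_0_lt_compat; auto|].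
  pose proof (pow2_ge_0 (sin h)). pose proof (pow2_ge_0 (cos v)). nra.
Qed.

(* Write [w = sin (v + h) / sin v = cos h + u]; then [bterm v h = (ln w - (w - 1)) - (1 - cos h)]
   and [(w - 1)^2 <= 2 u^2 + 2 (1 - cos h)^2]. *)
Lemma bterm_lower v h c eta :
  0 < c < 1 -> 0 <= h <= eta -> eta <= PI -> 0 < sin v -> c <= sin (v + h) / sin v ->
  - ln (4 / c) * (33 * eta ^ 2 + 8 * eta ^ 2 / sin v ^ 2) <= bterm v h.
Proof.
  intros Hc Hh Heta Hv Hw. unfold bterm.
  set (w := sin (v + h) / sin v) in *. set (u := sin h * cot v).
  set (L := ln (4 / c)).
  assert (Hwu : w = cos h + u) by (apply sin_add_div_sin; lra).
  pose proof (ln_4_div_gt_1 c (proj1 Hc) (proj2 Hc)) as HL. fold L in HL.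
  pose proof (ln_sub_ge_sq w c Hc Hw) as Hln. fold L in Hln.
  pose proof (one_sub_cos_le h) as Hcos. pose proof (COS_bound h).
  pose proof PI_4 as Hpi.
  assert (Hsv : 0 < sin v ^ 2) by (apply pow_lt; lra).
  assert (Hu : u ^ 2 <= eta ^ 2 / sin v ^ 2).
  { apply (Rle_trans _ (h ^ 2 / sin v ^ 2)); [apply sq_sin_mul_cot_le; lra|].
    unfold Rdiv. apply Rmult_le_compat_r; [left; apply Rinv_0_lt_compat; auto|].
    apply pow_incr. lra. }
  assert (Hw1 : (w - 1) ^ 2 <= 2 * u ^ 2 + h ^ 4 / 2).
  { assert ((1 - cos h) ^ 2 <= (h ^ 2 / 2) ^ 2) by (apply pow_incr; lra).
    pose proof (pow2_ge_0 (u + (1 - cos h))). rewrite Hwu. nra. }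
  assert (Hh4 : h ^ 4 <= 16 * eta ^ 2).
  { assert (h ^ 2 <= eta ^ 2) by (apply pow_incr; lra).
    assert (h ^ 2 <= 16) by (replace 16 with (4 ^ 2) by ring; apply pow_incr; lra).
    pose proof (pow2_ge_0 h). nra. }
  assert (Hh2 : h ^ 2 <= eta ^ 2) by (apply pow_incr; lra).
  assert (4 * L * (w - 1) ^ 2 <= L * (32 * eta ^ 2 + 8 * (eta ^ 2 / sin v ^ 2)))
    by (apply (Rle_trans _ (4 * L * (2 * u ^ 2 + h ^ 4 / 2))); nra).
  assert (h ^ 2 / 2 <= L * eta ^ 2) by nra.
  unfold Rdiv in *. nra.
Qed.

(* Reflect through [PI] and use that [sin t / t] is non-increasing. *)
Lemma sin_add_div_sin_ge q m x s :
  1 <= m -> m <= q - 1 -> -1 < x -> 0 <= s -> x + s < 1 ->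
  1 - s / (1 - x) <= sin (PI * (m + x) / q + PI * s / q) / sin (PI * (m + x) / q).
Proof.
  intros Hm Hmq Hx Hs Hxs. pose proof PI_RGT_0 as Hpi.
  set (a := PI * (q - m - x - s) / q). set (b := PI * (q - m - x) / q).
  assert (Ea : sin a = sin (PI * (m + x) / q + PI * s / q))
    by (rewrite <- sin_PI_x; f_equal; unfold a; field; lra).
  assert (Eb : sin b = sin (PI * (m + x) / q)) by (rewrite <- sin_PI_x; f_equal; unfold b; field; lra).
  assert (Ha : 0 < a) by (unfold a; apply Rdiv_lt_0_compat; nra).
  assert (Hab : a <= b).
  { unfold a, b, Rdiv. apply Rmult_le_compat_r; [left; apply Rinv_0_lt_compat|]; nra. }
  assert (Hb : b <= PI).
  { unfold b. apply (Rmult_le_reg_r q); [lra|]. unfold Rdiv. rewrite Rmult_assoc, Rinv_l; nra. }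
  pose proof (mul_sin_le_mul_sin a b Ha Hab Hb) as Hsin. rewrite Ea, Eb in Hsin.
  assert (Hsb : 0 < sin (PI * (m + x) / q)) by (apply sin_PI_mul_div_pos; lra).
  assert (Hratio : a / b <= sin (PI * (m + x) / q + PI * s / q) / sin (PI * (m + x) / q)).
  { apply (Rmult_le_reg_r (sin (PI * (m + x) / q) * b)); [nra|].
    unfold Rdiv. field_simplify; lra. }
  assert (a / b = 1 - s / (q - m - x)) by (unfold a, b; field; split; lra).
  assert (s / (q - m - x) <= s / (1 - x)).
  { unfold Rdiv. apply Rmult_le_compat_l; auto. apply Rinv_le_contravar; lra. }
  lra.
Qed.

Lemma inv_sin_sq_le_jordan y q c :
  0 < q -> 0 < c -> c <= y -> y <= q / 2 -> / sin (PI * y / q) ^ 2 <= q ^ 2 / (4 * c ^ 2).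
Proof.
  intros Hq Hc Hcy Hyq. pose proof PI_RGT_0 as Hpi.
  assert (Hv : 0 <= PI * y / q <= PI / 2).
  { split; [apply Rmult_le_pos; [nra | left; apply Rinv_0_lt_compat; lra]|].
    apply (Rmult_le_reg_r q); [lra|]. unfold Rdiv. rewrite Rmult_assoc, Rinv_l; nra. }
  pose proof (jordan_ineq _ Hv) as J.
  replace (2 * (PI * y / q) / PI) with (2 * y / q) in J by (field; lra).
  assert (H2 : 2 * c / q <= 2 * y / q) by (unfold Rdiv; apply Rmult_le_compat_r;
    [left; apply Rinv_0_lt_compat|]; lra).
  assert (H0 : 0 < 2 * c / q) by (apply Rdiv_lt_0_compat; lra).
  replace (q ^ 2 / (4 * c ^ 2)) with (/ (2 * c / q) ^ 2) by (field; lra).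
  apply Rinv_le_contravar; [apply pow_lt; auto|]. apply pow_incr. lra.
Qed.

Lemma inv_sin_sq_le q m x :
  1 <= m -> m <= q - 1 -> -1 < x -> x < 1 ->
  / sin (PI * (m + x) / q) ^ 2 <= q ^ 2 / (4 * (1 - Rabs x) ^ 2) * (/ m ^ 2 + / (q - m) ^ 2).
Proof.
  intros Hm Hmq Hx1 Hx2.
  assert (Hx : - Rabs x <= x <= Rabs x) by (unfold Rabs; destruct Rcase_abs; split; lra).
  assert (Hax : 0 < 1 - Rabs x) by (unfold Rabs; destruct Rcase_abs; lra).
  set (K := q ^ 2 / (4 * (1 - Rabs x) ^ 2)).
  assert (HK : 0 <= K).
  { unfold K. apply Rmult_le_pos; [nra|].
    left. apply Rinv_0_lt_compat, Rmult_lt_0_compat; [lra | apply pow_lt; lra]. }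
  assert (Hm2 : 0 < / m ^ 2) by (apply Rinv_0_lt_compat, pow_lt; lra).
  assert (Hqm2 : 0 < / (q - m) ^ 2) by (apply Rinv_0_lt_compat, pow_lt; lra).
  destruct (Rle_lt_dec (m + x) (q / 2)) as [Hy|Hy].
  - apply (Rle_trans _ (K * / m ^ 2)); [|nra].
    replace (K * / m ^ 2) with (q ^ 2 / (4 * (m * (1 - Rabs x)) ^ 2)) by (unfold K; field; lra).
    apply inv_sin_sq_le_jordan; nra.
  - apply (Rle_trans _ (K * / (q - m) ^ 2)); [|nra].
    replace (K * / (q - m) ^ 2) with (q ^ 2 / (4 * ((q - m) * (1 - Rabs x)) ^ 2))
      by (unfold K; field; lra).
    replace (sin (PI * (m + x) / q)) with (sin (PI * (q - m - x) / q))
      by (rewrite <- sin_PI_x; f_equal; field; lra).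
    apply inv_sin_sq_le_jordan; nra.
Qed.

(** * Bounds on [B] *)

Lemma sum1_inv_sin_sq_le (Q M : nat) (r : nat -> nat) x :
  -1 < x < 1 ->
  (forall n, (1 <= n <= M)%nat -> (1 <= r n < Q)%nat) ->
  (forall n1 n2, (1 <= n1 <= M)%nat -> (1 <= n2 <= M)%nat -> r n1 = r n2 -> n1 = n2) ->
  sum1 (fun n => / sin (PI * (INR (r n) + x) / INR Q) ^ 2) M <= INR Q ^ 2 / (1 - Rabs x) ^ 2.
Proof.
  intros Hx Hr Hinj.
  assert (Hax : 0 < 1 - Rabs x) by (unfold Rabs; destruct Rcase_abs; lra).
  set (K := INR Q ^ 2 / (4 * (1 - Rabs x) ^ 2)).
  assert (Hinv : forall m, 0 <= / INR m ^ 2).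
  { intro m. destruct (Req_dec (INR m) 0) as [->|Hm].
    - rewrite pow_i, Rinv_0 by lia. lra.
    - left. apply Rinv_0_lt_compat, pow_lt. pose proof (pos_INR m). lra. }
  assert (Hsum : sum1 (fun n => / INR (r n) ^ 2 + / INR (Q - r n) ^ 2) M <= 4).
  { rewrite sum1_add.
    pose proof (sum1_comp_inj_le r (fun m => / INR m ^ 2) M (Q - 1) Hinv
      ltac:(intros n Hn; specialize (Hr n Hn); lia) Hinj).
    pose proof (sum1_comp_inj_le (fun n => Q - r n)%nat (fun m => / INR m ^ 2) M (Q - 1) Hinv
      ltac:(intros n Hn; specialize (Hr n Hn); cbv beta; lia)
      ltac:(intros n1 n2 H1 H2 E; cbv beta in E; apply Hinj; auto;
            pose proof (Hr n1 H1); pose proof (Hr n2 H2); lia)).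
    pose proof (sum1_inv_sq_le_2 (Q - 1)). lra. }
  apply (Rle_trans _ (sum1 (fun n => K * (/ INR (r n) ^ 2 + / INR (Q - r n) ^ 2)) M)).
  - apply sum1_le. intros n Hn. specialize (Hr n Hn).
    rewrite minus_INR by lia.
    apply inv_sin_sq_le; try lra.
    + apply (le_INR 1). lia.
    + pose proof (le_INR (S (r n)) Q ltac:(lia)) as H. rewrite S_INR in H. lra.
  - rewrite sum1_scal.
    replace (INR Q ^ 2 / (1 - Rabs x) ^ 2) with (K * 4) by (unfold K; field; lra).
    apply Rmult_le_compat_l; [|auto].
    unfold K. apply Rmult_le_pos; [apply pow2_ge_0|].
    left. apply Rinv_0_lt_compat, Rmult_lt_0_compat; [lra | apply pow_lt; lra].
Qed.

Lemma B_nonpos al k M x :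
  irrational al -> (1 <= k)%nat -> INR M < IZR (cf_q al k) ->
  -1 < x -> x + INR M * cf_err al k < 1 -> B al k M x <= 0.
Proof.
  intros Hirr Hk HM Hx HxM.
  destruct (B_eq_sum_bterm al k M x Hirr Hk HM Hx HxM) as (Q & r & _ & Hr & _ & ->).
  pose proof (cf_err_pos al Hirr k).
  rewrite <- (Rmult_0_r (INR M)), <- sum1_const. apply sum1_le. intros n Hn.
  assert (0 <= INR n * cf_err al k <= INR M * cf_err al k).
  { pose proof (le_INR n M ltac:(lia)). pose proof (pos_INR n). split; nra. }
  destruct (sin_residue_pos (INR Q) (INR (r n)) x (INR n * cf_err al k)); try lra.
  - apply INR_bounds_of_lt, Hr, Hn.
  - apply bterm_nonpos; auto.
Qed.

Lemma le_mul_1_sub_of_le_1_sub_div y c x :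
  0 < c < 1 -> x <= 1 - y / (1 - c) -> y <= (1 - c) * (1 - x).
Proof.
  intros Hc Hx. apply (Rmult_le_reg_r (/ (1 - c))); [apply Rinv_0_lt_compat; lra|].
  replace ((1 - c) * (1 - x) * / (1 - c)) with (1 - x) by (field; lra).
  unfold Rdiv in Hx. lra.
Qed.

Lemma shift_add_M_err_lt_1 al k M x c :
  irrational al -> INR M < IZR (cf_q al k) -> 0 < c < 1 ->
  x <= 1 - IZR (cf_q al k) * cf_err al k / (1 - c) -> x + INR M * cf_err al k < 1.
Proof.
  intros Hirr HM Hc Hxc.
  pose proof (cf_q_ge_1 al Hirr k). pose proof (cf_err_pos al Hirr k).
  pose proof (le_mul_1_sub_of_le_1_sub_div _ c x Hc Hxc).
  assert (INR M * cf_err al k < IZR (cf_q al k) * cf_err al k)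
    by (apply Rmult_lt_compat_r; lra).
  assert (x < 1) by nra.
  nra.
Qed.

Lemma bterm_residue_lower q m x s c a :
  1 <= m <= q - 1 -> -1 < x -> x < 1 -> 0 < c < 1 -> 1 <= a -> 1 <= q ->
  0 <= s <= / a -> s <= (1 - c) * (1 - x) ->
  - ln (4 / c) * (33 * (PI / (a * q)) ^ 2 + 8 * (PI / (a * q)) ^ 2 / sin (PI * (m + x) / q) ^ 2)
    <= bterm (PI * (m + x) / q) (PI * s / q).
Proof.
  intros Hm Hx Hx1 Hc Ha Hq Hs Hsc. pose proof PI_RGT_0 as Hpi.
  assert (Hxs : x + s < 1) by nra.
  destruct (sin_residue_pos q m x s Hm Hx (proj1 Hs) Hxs) as [Hv _].
  apply bterm_lower; auto.
  - replace (PI / (a * q)) with (PI * / a / q) by (field; lra).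
    unfold Rdiv. split.
    + apply Rmult_le_pos; [apply Rmult_le_pos | left; apply Rinv_0_lt_compat]; lra.
    + apply Rmult_le_compat_r; [left; apply Rinv_0_lt_compat; lra|].
      apply Rmult_le_compat_l; lra.
  - unfold Rdiv. rewrite <- (Rmult_1_r PI) at 2. apply Rmult_le_compat_l; [lra|].
    rewrite <- Rinv_1. apply Rinv_le_contravar; nra.
  - assert (s / (1 - x) <= 1 - c).
    { apply (Rmult_le_reg_r (1 - x)); [lra|]. unfold Rdiv. rewrite Rmult_assoc, Rinv_l; lra. }
    eapply Rle_trans; [|apply sin_add_div_sin_ge]; lra.
Qed.

Lemma eta_sq_budget_le q a x m S :
  1 <= q -> 1 <= a -> -1 < x < 1 -> 0 <= m <= q -> S <= q ^ 2 / (1 - Rabs x) ^ 2 ->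
  33 * (PI / (a * q)) ^ 2 * m + 8 * (PI / (a * q)) ^ 2 * S
    <= 1000 / ((1 - Rabs x) ^ 2 * a ^ 2).
Proof.
  intros Hq Ha Hx Hm HS. pose proof PI_RGT_0. pose proof PI_4.
  set (eta := PI / (a * q)).
  assert (Hax : 0 < 1 - Rabs x) by (unfold Rabs; destruct Rcase_abs; lra).
  assert (Hax1 : (1 - Rabs x) ^ 2 <= 1) by (pose proof (Rabs_pos x); nra).
  set (D := (1 - Rabs x) ^ 2 * a ^ 2).
  assert (HD : 0 < D) by (unfold D; apply Rmult_lt_0_compat; apply pow_lt; lra).
  assert (E1 : eta ^ 2 * m <= PI ^ 2 / D).
  { apply (Rle_trans _ (eta ^ 2 * q)); [apply Rmult_le_compat_l; [apply pow2_ge_0 | lra]|].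
    replace (eta ^ 2 * q) with (PI ^ 2 / (a ^ 2 * q)) by (unfold eta; field; lra).
    unfold Rdiv. apply Rmult_le_compat_l; [nra|]. apply Rinv_le_contravar; [auto|].
    unfold D. nra. }
  assert (E2 : eta ^ 2 * S <= PI ^ 2 / D).
  { apply (Rle_trans _ (eta ^ 2 * (q ^ 2 / (1 - Rabs x) ^ 2))).
    - apply Rmult_le_compat_l; [apply pow2_ge_0 | auto].
    - unfold eta, D. right. field. lra. }
  assert (E3 : 41 * PI ^ 2 / D <= 1000 / D).
  { unfold Rdiv. apply Rmult_le_compat_r; [left; apply Rinv_0_lt_compat; auto|]. nra. }
  unfold Rdiv in *. nra.
Qed.

Lemma B_lower al k M x c :
  irrational al -> (1 <= k)%nat -> INR M < IZR (cf_q al k) -> 0 < c < 1 -> -1 < x ->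
  x <= 1 - IZR (cf_q al k) * cf_err al k / (1 - c) ->
  - 1000 * ln (4 / c) / ((1 - Rabs x) ^ 2 * IZR (cf_a al (S k)) ^ 2) <= B al k M x.
Proof.
  intros Hirr Hk HM Hc Hx Hxc.
  pose proof (cf_q_ge_1 al Hirr k) as Hq. pose proof (cf_err_pos al Hirr k) as Hd.
  pose proof (cf_a_mul_q_mul_err_lt_1 al Hirr k) as Hda. pose proof (cf_a_S_ge_1 al Hirr k) as Ha.
  set (q := IZR (cf_q al k)) in *. set (d := cf_err al k) in *.
  set (a := IZR (cf_a al (S k))) in *.
  pose proof (ln_4_div_gt_1 c (proj1 Hc) (proj2 Hc)) as HL.
  pose proof (le_mul_1_sub_of_le_1_sub_div _ c x Hc Hxc) as Hqd.
  assert (Hx1 : x < 1) by nra.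
  assert (Hqda : q * d <= / a).
  { apply (Rmult_le_reg_l a); [lra|]. rewrite Rinv_r by lra. nra. }
  assert (HMd : INR M * d < q * d) by (apply Rmult_lt_compat_r; lra).
  pose proof (shift_add_M_err_lt_1 al k M x c Hirr HM Hc Hxc) as HxM.
  destruct (B_eq_sum_bterm al k M x Hirr Hk HM Hx HxM) as (Q & r & HQ & Hr & Hinj & ->).
  rewrite HQ. fold q d.
  eapply Rle_trans; [|apply sum1_le; intros n Hn;
    assert (Hnd : 0 <= INR n * d <= INR M * d)
      by (pose proof (le_INR n M ltac:(lia)); pose proof (pos_INR n); split; nra);
    apply (bterm_residue_lower _ _ x _ c a); auto].
  - rewrite (sum1_ext _ (fun n => - ln (4 / c) * (33 * (PI / (a * q)) ^ 2) +
       - ln (4 / c) * (8 * (PI / (a * q)) ^ 2) * / sin (PI * (INR (r n) + x) / q) ^ 2))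
      by (intros; unfold Rdiv; ring).
    rewrite sum1_add, sum1_const, sum1_scal.
    pose proof (sum1_inv_sin_sq_le Q M r x ltac:(lra) Hr Hinj) as Hsin.
    rewrite HQ in Hsin. fold q in Hsin.
    pose proof (eta_sq_budget_le q a x (INR M) _ Hq Ha ltac:(lra)
      ltac:(pose proof (pos_INR M); lra) Hsin).
    unfold Rdiv in *. nra.
  - pose proof (INR_bounds_of_lt _ _ (Hr n Hn)) as Hrn. rewrite HQ in Hrn. exact Hrn.
  - split; lra.
  - lra.
Qed.

(* Each digit [b l <= a_{l+1}] together with [||q_{l-1} al|| = a_{l+1} ||q_l al|| + ||q_{l+1} al||]
   keeps the partial tails of the alternating sum inside one error interval. *)
Lemma alternating_tail_bounds al k (b : nat -> nat) : irrational al -> forall L i,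
  (forall l, (S i <= l < S i + L)%nat -> INR (b l) <= IZR (cf_a al (S l))) ->
  - cf_err al (S i) <=
    (-1) ^ (k + S i) * fold_right Rplus 0
      (map (fun l => (-1) ^ (k + l) * INR (b l) * dist_int (IZR (cf_q al l) * al)) (seq (S i) L))
  <= cf_err al i.
Proof.
  intros Hirr L. induction L as [|L IH]; intros i Hb.
  - simpl. pose proof (cf_err_pos al Hirr (S i)). pose proof (cf_err_pos al Hirr i). lra.
  - rewrite <- cons_seq. cbn [map fold_right].
    specialize (IH (S i) ltac:(intros; apply Hb; lia)).
    set (V := fold_right _ _ _) in *.
    rewrite dist_int_cf_q by (auto; lia).
    pose proof (cf_err_rec al Hirr i).
    pose proof (Hb (S i) ltac:(lia)). pose proof (pos_INR (b (S i))).
    pose proof (cf_err_pos al Hirr (S i)).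
    replace (k + S (S i))%nat with (S (k + S i)) in IH by lia. simpl pow in IH.
    destruct (pow_m1_cases (k + S i)) as [E|E]; rewrite E in *; nra.
Qed.

Lemma eps_bounds al (b : nat -> nat) K k :
  irrational al -> (1 <= k)%nat ->
  (forall l, (S k <= l < K)%nat -> INR (b l) <= IZR (cf_a al (S l))) ->
  - IZR (cf_q al k) * cf_err al k <= eps al b K k <= IZR (cf_q al k) * cf_err al (S k).
Proof.
  intros Hirr Hk Hb.
  pose proof (alternating_tail_bounds al k b Hirr (K - S k) k ltac:(intros; apply Hb; lia)) as H.
  replace ((-1) ^ (k + S k)) with (-1) in H
    by (rewrite pow_add; simpl; destruct (pow_m1_cases k) as [-> | ->]; ring).
  pose proof (cf_q_ge_1 al Hirr k). unfold eps. split; nra.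
Qed.

Lemma B_nonpos_ostrowski al (b : nat -> nat) K k M bb :
  irrational al -> ostrowski_digits al b K -> (1 <= k)%nat -> (k <= K - 1)%nat ->
  INR M < IZR (cf_q al k) -> (bb + 1 <= b k)%nat ->
  B al k M (INR bb * IZR (cf_q al k) * dist_int (IZR (cf_q al k) * al) + eps al b K k) <= 0.
Proof.
  intros Hirr Host Hk HkK HM Hbb.
  destruct (Host ltac:(lia)) as (_ & Hdig & _).
  assert (Hdig' : forall l, (l < K)%nat -> INR (b l) <= IZR (cf_a al (S l)))
    by (intros l Hl; rewrite INR_IZR_INZ; apply IZR_le, Hdig, Hl).
  pose proof (eps_bounds al b K k Hirr Hk ltac:(intros; apply Hdig'; lia)) as Heps.
  rewrite dist_int_cf_q by auto.
  assert (Hbb' : INR bb + 1 <= IZR (cf_a al (S k))).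
  { rewrite <- S_INR. apply (Rle_trans _ (INR (b k))); [apply le_INR; lia | apply Hdig'; lia]. }
  pose proof (cf_q_ge_1 al Hirr k). pose proof (cf_a_S_ge_1 al Hirr k).
  pose proof (cf_a_mul_q_mul_err_lt_1 al Hirr k).
  pose proof (cf_err_pos al Hirr k). pose proof (cf_err_pos al Hirr (S k)).
  pose proof (pos_INR bb). pose proof (pos_INR M).
  destruct k as [|j]; [lia|].
  (* the shift stays below [q_k ||q_{k-1} al|| <= 1] *)
  pose proof (cf_err_rec al Hirr j). pose proof (cf_q_S_mul_err_le_1 al Hirr j).
  set (q := IZR (cf_q al (S j))) in *. set (d := cf_err al (S j)) in *.
  assert (INR M * d < q * d) by (apply Rmult_lt_compat_r; lra).
  assert (q * d < 1) by nra.
  assert (0 <= INR bb * q * d) by (apply Rmult_le_pos; [apply Rmult_le_pos|]; lra).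
  assert ((INR bb + 1) * (q * d) <= IZR (cf_a al (S (S j))) * (q * d))
    by (apply Rmult_le_compat_r; nra).
  apply B_nonpos; auto; fold q d; nra.
Qed.

Lemma div_cf_a_sq_mul_cf_q_pos al k C :
  irrational al -> 0 < C -> 0 < C / (IZR (cf_a al (S k)) ^ 2 * IZR (cf_q al k)).
Proof.
  intros Hirr HC. pose proof (cf_a_S_ge_1 al Hirr k). pose proof (cf_q_ge_1 al Hirr k).
  apply Rdiv_lt_0_compat; [lra|]. apply Rmult_lt_0_compat; [apply pow_lt|]; lra.
Qed.

Theorem proposition2 :
  exists C : R, 0 < C /\
  (* (i) *)
  (forall (alpha : R) (k M : nat) (x ck : R),
     irrational alpha ->
     (1 <= k)%nat ->
     INR M < IZR (cf_q alpha k) ->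
     10 / (IZR (cf_q alpha k)) ^ 2 <= ck -> ck < 1 ->
     IZR (cf_q alpha k) * dist_int (IZR (cf_q alpha k) * alpha) <= 1 - ck ->
     -1 < x ->
     x <= 1 - IZR (cf_q alpha k) * dist_int (IZR (cf_q alpha k) * alpha) / (1 - ck) ->
     - C * ln (4 / ck) / ((1 - Rabs x) ^ 2 * (IZR (cf_a alpha (S k))) ^ 2) <= B alpha k M x
     /\ B alpha k M x <= C / ((IZR (cf_a alpha (S k))) ^ 2 * IZR (cf_q alpha k))) /\
  (* (ii) *)
  (forall (alpha : R) (b : nat -> nat) (K k M bb : nat),
     irrational alpha ->
     ostrowski_digits alpha b K ->
     (1 <= k)%nat -> (k <= K - 1)%nat ->
     INR M < IZR (cf_q alpha k) ->
     (bb + 1 <= b k)%nat ->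
     B alpha k M (INR bb * IZR (cf_q alpha k) * dist_int (IZR (cf_q alpha k) * alpha)
                  + eps alpha b K k)
       <= C / ((IZR (cf_a alpha (S k))) ^ 2 * IZR (cf_q alpha k))).
Proof.
  exists 1000. split; [lra|]. split.
  -
    intros al k M x c Hirr Hk HM Hc Hc1 _ Hx Hxc.
    rewrite dist_int_cf_q in Hxc by auto.
    pose proof (cf_q_ge_1 al Hirr k).
    assert (Hc0 : 0 < c) by (eapply Rlt_le_trans; [|exact Hc]; apply Rdiv_lt_0_compat; nra).
    split; [apply B_lower; auto|].
    apply Rlt_le, (Rle_lt_trans _ 0); [|apply div_cf_a_sq_mul_cf_q_pos; [auto | lra]].
    apply B_nonpos; auto. apply (shift_add_M_err_lt_1 al k M x c); auto.
  - intros al b K k M bb Hirr Host Hk HkK HM Hbb.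
    apply Rlt_le, (Rle_lt_trans _ 0); [|apply div_cf_a_sq_mul_cf_q_pos; [auto | lra]].
    apply B_nonpos_ostrowski; auto.
Qed.
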